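(* Let $X$ be a countable set with at least two elements, equipped with the discrete metric $\rho$, and denote this metric space by $\mathcal{X}$. Let $p\in(0,\infty)$ and let $f:\mathcal{W}_p(\mathcal{X})\to\mathcal{W}_p(\mathcal{X})$ be a surjective isometry (a bijection preserving $W_p$). Then there exists a bijection $\sigma:\mathcal{X}\to\mathcal{X}$ such that $$f(\mu)(\{x\})=\mu(\{\sigma^{-1}(x)\})\qquad\text{for all }x\in\mathcal{X}\text{ and all }\mu\in\mathcal{P}(\mathcal{X}).$$ Conversely, for any bijection $\sigma:\mathcal{X}\to\mathcal{X}$, the map defined by this formula is an isometry of $\mathcal{W}_p(\mathcal{X})$.
   Context: $\rho(x,y)=1$ if $x\ne y$ and $\rho(x,x)=0$. $\mathcal{P}(\mathcal{X})$ is the set of probability measures on the power set of $\mathcal{X}$. A coupling of $\mu,\nu\in\mathcal{P}(\mathcal{X})$ is a probability measure $\pi$ on $\mathcal{X}^2$ with marginals $\mu$ and $\nu$; $\mathcal{C}(\mu,\nu)$ is the set of couplings. $W_p(\mu,\nu)=\big(\inf_{\pi\in\mathcal{C}(\mu,\nu)}\int\rho^p\,d\pi\big)^{1/p}$ for $p\ge1$ and $W_p(\mu,\nu)=\inf_{\pi\in\mathcal{C}(\mu,\nu)}\int\rho^p\,d\pi$ for $0<p<1$. $\mathcal{W}_p(\mathcal{X})$ is the metric space $(\mathcal{P}(\mathcal{X}),W_p)$. *)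

From HB Require Import structures.
From mathcomp Require Import all_boot all_order all_algebra.
From mathcomp Require Import all_classical all_reals all_analysis.
Set Implicit Arguments. Unset Strict Implicit. Unset Printing Implicit Defensive.
Import Order.TTheory GRing.Theory Num.Theory numFieldNormedType.Exports.
Local Open Scope classical_set_scope.
Local Open Scope ring_scope.

Section Wass.
Variable R : realType.

Definition is_prob (T : Type) (mu : set T -> R) : Prop :=
  [/\ forall A, 0 <= mu A,
      mu setT = 1 &
      forall F : nat -> set T,
        (forall i j, i <> j -> F i `&` F j = set0) ->
        (fun n => \sum_(0 <= i < n) mu (F i)) @ \oo --> mu (\bigcup_n F n)].

Record prob (T : Type) := Prob { pmeas :> set T -> R; pmeasP : is_prob pmeas }.

Variable X : countType.

Definition rho (x y : X) : R := if x == y then 0 else 1.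

Definition coupling (mu nu : prob X) (pi : prob (X * X)) : Prop :=
  (forall A, pi (A `*` setT) = mu A) /\ (forall B, pi (setT `*` B) = nu B).

(* \int rho^p dpi ; rho^p is the simple function taking value 0^p on the
   diagonal and 1^p off the diagonal, so its integral is written out. *)
Definition cost (p : R) (pi : prob (X * X)) : R :=
  (0 `^ p) * pi [set z | rho z.1 z.2 = 0] + (1 `^ p) * pi [set z | rho z.1 z.2 = 1].

Definition Wp (p : R) (mu nu : prob X) : R :=
  let c := inf [set cost p pi | pi in [set pi | coupling mu nu pi]] in
  if 1 <= p then c `^ (p^-1) else c.

Definition Wp_isometry (p : R) (f : prob X -> prob X) : Prop :=
  forall mu nu, Wp p (f mu) (f nu) = Wp p mu nu.

End Wass.

(* On a discrete space the cost of a coupling is the mass it puts off the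
   diagonal, so W_p is an increasing function of the optimal cost D(mu, nu),
   and isometries preserve D.  Against a Dirac mass D(mu, delta_y) = 1 - mu{y}.
   Call nu singular to mu when D(mu, nu) = 1.  Dirac masses are characterized
   by D alone: they are the measures mu that are the only measure singular to
   every measure singular to mu.  Indeed the product coupling gives
   D(mu, nu) <= 1 - mu{x} nu{x}, so if mu charges x then every measure singular
   to mu is singular to delta_x.  An isometry f therefore permutes the Dirac
   masses, f delta_x = delta_(sigma x), and D(f mu, delta_x) =
   D(mu, delta_(sigma^-1 x)) reads f mu {x} = mu {sigma^-1 x}.  Conversely,
   pushing couplings forward along sigma x sigma is a cost-preserving
   bijection between the couplings of mu, nu and of their images. *)

From HB Require Import structures.
From mathcomp Require Import all_boot all_order all_algebra.
From mathcomp Require Import all_classical all_reals all_analysis.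
Import Order.TTheory GRing.Theory Num.Theory numFieldNormedType.Exports.
Local Open Scope classical_set_scope.
Local Open Scope ring_scope.
Set Implicit Arguments. Unset Strict Implicit. Unset Printing Implicit Defensive.

Section ProbabilityBasics.
Variables (R : realType) (T : Type).
Implicit Types (P : prob R T) (A B G : set T).

Lemma prob_ge0 P A : 0 <= P A. Proof. by case: (pmeasP P). Qed.

Lemma probT P : P setT = 1. Proof. by case: (pmeasP P). Qed.

Lemma prob_cvg P (F : nat -> set T) :
  (forall i j, i <> j -> F i `&` F j = set0) ->
  (fun n => \sum_(0 <= i < n) P (F i)) @ \oo --> P (\bigcup_n F n).
Proof. by case: (pmeasP P) => _ _; apply. Qed.

Lemma prob0 P : P set0 = 0.
Proof.
have sum_cvg := @prob_cvg P (fun=> set0) (fun _ _ _ => setI0 _).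
have /cvg_series_cvg_0 : cvgn (series (fun=> P set0)) by exact: cvgP _ sum_cvg.
by move/cvg_lim => <- //; rewrite lim_cst.
Qed.

Lemma probU P A B : A `&` B = set0 -> P (A `|` B) = P A + P B.
Proof.
move=> AB0.
pose F (i : nat) := if i == 0%N then A else if i == 1%N then B else set0.
have F_disj i j : i <> j -> F i `&` F j = set0.
  by case: i j => [|[|i]] [|[|j]] //= _; rewrite /F /= ?setI0 ?set0I // setIC.
have UF : \bigcup_n F n = A `|` B.
  apply/seteqP; split=> [x [[|[|i]]] //= _ Fx|x [Ax|Bx]]; [by left|by right|..].
  - by exists 0%N.
  - by exists 1%N.
have := @prob_cvg P F F_disj; rewrite UF -(cvg_shiftn 2).
have -> : [sequence \sum_(0 <= i < (n + 2)%N) P (F i)]_n = fun=> P A + P B.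
  apply/funext => n /=; rewrite addn2 !big_nat_recl // big1 ?addr0 // => i _.
  exact: prob0.
by move/cvg_lim => <- //; rewrite lim_cst.
Qed.

Lemma probC P A : P (~` A) = 1 - P A.
Proof. by rewrite -(probT P) -(setUCr A) probU ?setICr // addrAC subrr add0r. Qed.

Lemma le_prob P A B : A `<=` B -> P A <= P B.
Proof.
move=> AB; have -> : B = A `|` (B `&` ~` A).
  by rewrite setUIr setUCr setIT; apply/esym/setUidPr.
by rewrite probU ?lerDl ?prob_ge0 // setICA setICr setI0.
Qed.

Lemma prob_le1 P A : P A <= 1.
Proof. by rewrite -(probT P); apply: le_prob. Qed.

Lemma prob_eq_full P G A B : P (~` G) = 0 -> A `&` G = B `&` G -> P A = P B.
Proof.
move=> PG0 ABG.
have on_full S : P S = P (S `&` G).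
  rewrite -{1}(setIT S) -(setUCr G) setIUr probU; last first.
    by rewrite setIACA setICr !setI0.
  suff -> : P (S `&` ~` G) = 0 by rewrite addr0.
  by apply/eqP; rewrite eq_le prob_ge0 andbT -PG0 le_prob.
by rewrite on_full ABG -on_full.
Qed.

Lemma prob_ext (P Q : prob R T) : (forall A, P A = Q A) -> P = Q.
Proof.
case: P Q => [mP hP] [mQ hQ] /= /funext PQ; move: hP hQ; rewrite PQ => hP hQ.
by congr Prob; exact: Prop_irrelevance.
Qed.

End ProbabilityBasics.

Lemma esumZl (R : realType) (T : choiceType) (S : set T) (a : T -> \bar R) (r : R) :
  0 <= r -> (forall i, 0 <= a i)%E ->
  \esum_(i in S) (r%:E * a i)%E = (r%:E * \esum_(i in S) a i)%E.
Proof.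
move=> r0 a0; rewrite /esum -ereal_supZl //; last first.
  by apply/set0P; exists 0%E, set0; [exact: fsets_set0 | rewrite fsbig_set0].
congr ereal_sup; apply/seteqP; split=> x /=.
- by move=> [A fA <-]; exists (\sum_(i \in A) a i)%E; [exists A | rewrite ge0_mule_fsumr].
- by move=> [_ [A fA <-] <-]; exists A => //; rewrite ge0_mule_fsumr.
Qed.

Section CountableSpace.
Variables (R : realType) (T : countType).
Implicit Types (P : prob R T) (A : set T).

Lemma prob_esum P A : (P A)%:E = \esum_(t in A) (P [set t])%:E.
Proof.
(* Countable additivity along the partition of A by the value of [pickle]. *)
pose F (n : nat) := A `&` [set t | pickle t = n].
have F_disj i j : i <> j -> F i `&` F j = set0.
  by move=> ij; apply/seteqP; split=> t //= [[_ ti] [_ tj]]; apply: ij; rewrite -ti -tj.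
have UF : A = \bigcup_n F n.
  by apply/seteqP; split=> [t At | t [n _ []]] //; exists (pickle t).
have F_atom i : \esum_(t in F i) (P [set t])%:E = (P (F i))%:E.
  have [[t Ft]|/forallNP F0] := pselect (exists t, F i t).
    suff -> : F i = [set t] by rewrite esum_set1 // lee_fin prob_ge0.
    apply/seteqP; split=> [s Fs|s -> //] /=; apply: (pcan_inj (@pickleK T)).
    by case: Fs => _ ->; case: Ft => _ ->.
  suff -> : F i = set0 by rewrite esum_set0 prob0.
  by apply/seteqP; split=> s // /F0.
have sum_cvg := @prob_cvg _ _ P F F_disj; rewrite -UF in sum_cvg.
rewrite {2}UF nneseries_sum_bigcup; first last.
- by move=> t; rewrite lee_fin prob_ge0.
- by apply/trivIsetP => i j _ _ /eqP; exact: F_disj.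
under eq_fun do under eq_bigr do rewrite F_atom.
under eq_fun do rewrite sumEFin.
by rewrite -(cvg_lim _ sum_cvg) // -EFin_lim //; exact: cvgP sum_cvg.
Qed.

Lemma prob_atom_ext (P Q : prob R T) : (forall t, P [set t] = Q [set t]) -> P = Q.
Proof.
move=> PQ; apply: prob_ext => A; apply/EFin_inj.
by rewrite !prob_esum; apply: eq_esum => t _; rewrite PQ.
Qed.

Lemma exists_atom_gt0 P : exists x, 0 < P [set x].
Proof.
apply/not_existsP => atoms_le0.
suff : (P setT)%:E = 0%E by rewrite probT => -[/eqP]; rewrite oner_eq0.
rewrite prob_esum esum1 // => t _; congr (_%:E).
by apply/eqP; rewrite eq_le prob_ge0 andbT leNgt; apply/negP/atoms_le0.
Qed.

Lemma prob_atom1E P x : P [set x] = 1 -> forall A, P A = if `[< A x >] then 1 else 0.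
Proof.
move=> Px1 A; apply/eqP; case: ifPn => [/asboolP Ax|/asboolPn nAx].
  by rewrite eq_le prob_le1 -Px1 le_prob // => _ ->.
rewrite eq_le prob_ge0 andbT.
have <- : P (~` [set x]) = 0 by rewrite probC Px1 subrr.
by apply: le_prob => y Ay yx; apply: nAx; rewrite -yx.
Qed.

Lemma prob_atom1 P x : (forall y, y != x -> P [set y] = 0) -> P [set x] = 1.
Proof.
move=> atoms0; apply/eqP; rewrite eq_sym -subr_eq0 -probC; apply/eqP/EFin_inj.
by rewrite prob_esum esum1 // => y /eqP /atoms0 ->.
Qed.

Definition weight_measure (w : T -> R) (A : set T) : R := fine (\esum_(t in A) (w t)%:E).

Lemma weight_measure_prob (w : T -> R) : (forall t, 0 <= w t) ->
  \esum_(t in setT) (w t)%:E = 1%E -> is_prob (weight_measure w).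
Proof.
move=> w_ge0 w_sum1.
have wsum_ge0 A : (0 <= \esum_(t in A) (w t)%:E)%E.
  by apply: esum_ge0 => t _; rewrite lee_fin.
have esum_fin A : \esum_(t in A) (w t)%:E \is a fin_num.
  rewrite ge0_fin_numE // (@le_lt_trans _ _ 1%E) ?ltry // -w_sum1.
  rewrite esum_mkcond [leRHS]esum_mkcond; apply: le_esum => t _.
  by case: ifP; rewrite ?in_setT lee_fin.
split=> [A||F F_disj]; [exact: fine_ge0 | by rewrite /weight_measure w_sum1 |].
have F_triv : trivIset setT F by apply/trivIsetP => i j _ _ /eqP; exact: F_disj.
rewrite /weight_measure nneseries_sum_bigcup //.
set e := fun i => \esum_(j in F i) (w j)%:E.
have sum_fin : (\sum_(0 <= i <oo) e i)%E \is a fin_num by rewrite -nneseries_sum_bigcup.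
have : (\sum_(0 <= i < n) e i)%E @[n --> \oo] --> (\sum_(0 <= i <oo) e i)%E.
  exact: (@is_cvg_nneseries _ e xpredT 0%N (fun i _ _ => wsum_ge0 (F i))).
rewrite -(fineK sum_fin) => /fine_cvgP[_].
apply: cvg_trans; apply: near_eq_cvg; near=> n => /=.
by rewrite -EFin_sum_fine // => i _; exact: esum_fin.
Unshelve. all: by end_near.
Qed.

End CountableSpace.

Section Pushforward.
Variable R : realType.

Lemma pushforward_is_prob (T U : Type) (P : prob R T) (h : T -> U) :
  is_prob (fun B => P (h @^-1` B)).
Proof.
split=> [B||F F_disj]; [exact: prob_ge0 | by rewrite preimage_setT probT |].
rewrite preimage_bigcup; apply: prob_cvg => i j ij.
by rewrite -preimage_setI F_disj // preimage_set0.
Qed.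

Definition pushforward (T U : Type) (h : T -> U) (P : prob R T) : prob R U :=
  Prob (pushforward_is_prob P h).

End Pushforward.

Section DiscreteTransport.
Variables (R : realType) (X : countType).
Implicit Types (mu nu m n : prob R X) (pi : prob R (X * X)).

Definition dirac_weight (x t : X) : R := (t == x)%:R.

Lemma dirac_weight_ge0 x t : 0 <= dirac_weight x t. Proof. exact: ler0n. Qed.

Lemma esum_dirac_weight x : \esum_(t in setT) (dirac_weight x t)%:E = 1%E.
Proof.
rewrite (esumID [set x]) => [|t _]; last by rewrite lee_fin dirac_weight_ge0.
rewrite setTI esum_set1 ?lee_fin ?dirac_weight_ge0 // /dirac_weight eqxx.
by rewrite esum1 ?adde0 // => t [_ /eqP /negbTE ->].
Qed.

Definition dirac x : prob R X :=
  Prob (weight_measure_prob (dirac_weight_ge0 x) (esum_dirac_weight x)).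

Lemma diracE x A : dirac x A = if `[< A x >] then 1 else 0.
Proof.
apply: prob_atom1E; rewrite /= /weight_measure esum_set1 ?lee_fin ?dirac_weight_ge0 //.
by rewrite /dirac_weight eqxx.
Qed.

Lemma dirac_atom x y : dirac x [set y] = (y == x)%:R.
Proof. by rewrite diracE eq_sym; case: asboolP => [->|/eqP/negbTE->]; rewrite ?eqxx. Qed.

Lemma dirac_inj : injective dirac.
Proof.
move=> x y /(congr1 (fun P : prob R X => P [set x])); rewrite !dirac_atom eqxx.
by case: eqP => // _ /eqP; rewrite eq_sym pnatr_eq1.
Qed.

Definition prod_weight mu nu (z : X * X) : R := mu [set z.1] * nu [set z.2].

Lemma prod_weight_ge0 mu nu z : 0 <= prod_weight mu nu z.
Proof. by rewrite mulr_ge0 ?prob_ge0. Qed.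

Lemma esum_prod_weight mu nu A B :
  \esum_(z in A `*` B) (prod_weight mu nu z)%:E = (mu A * nu B)%:E.
Proof.
change (\esum_(z in A `*`` fun=> B) (mu [set z.1] * nu [set z.2])%:E = (mu A * nu B)%:E).
rewrite -(esum_esum (a := fun i j => (mu [set i] * nu [set j])%:E)); last first.
  by move=> i j _ _; rewrite lee_fin mulr_ge0 ?prob_ge0.
rewrite EFinM (prob_esum mu A) muleC -esumZl ?prob_ge0 //; last first.
  by move=> i; rewrite lee_fin prob_ge0.
apply: eq_esum => i _.
by rewrite (prob_esum nu B) muleC -esumZl ?prob_ge0 // => j; rewrite lee_fin prob_ge0.
Qed.

Lemma esum_prod_weight1 mu nu : \esum_(z in setT) (prod_weight mu nu z)%:E = 1%E.
Proof. by rewrite -setXTT esum_prod_weight !probT mulr1. Qed.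

Definition prod_prob mu nu : prob R (X * X) :=
  Prob (weight_measure_prob (@prod_weight_ge0 mu nu) (esum_prod_weight1 mu nu)).

Lemma prod_probX mu nu A B : prod_prob mu nu (A `*` B) = mu A * nu B.
Proof. by rewrite /= /weight_measure esum_prod_weight. Qed.

Lemma coupling_prod mu nu : coupling mu nu (prod_prob mu nu).
Proof. by split=> A; rewrite prod_probX probT ?mulr1 ?mul1r. Qed.

End DiscreteTransport.

Section OptimalCost.
Variables (R : realType) (X : countType) (p : R).
Hypothesis p_gt0 : 0 < p.
Implicit Types (mu nu m n : prob R X) (pi : prob R (X * X)).

Definition offdiag : set (X * X) := [set z | z.1 != z.2].

Lemma costE pi : cost p pi = pi offdiag.
Proof.
rewrite /cost powR0 ?gt_eqF // powR1 mul0r mul1r add0r; congr (pmeas pi _).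
apply/seteqP; split=> -[a b]; rewrite /= /rho /offdiag /=; case: eqP => //= _.
by move/esym/eqP; rewrite oner_eq0.
Qed.

Definition ot_cost mu nu : R := inf [set cost p pi | pi in [set pi | coupling mu nu pi]].

Lemma WpE mu nu : Wp p mu nu = if 1 <= p then ot_cost mu nu `^ p^-1 else ot_cost mu nu.
Proof. by []. Qed.

Lemma ot_cost_le mu nu pi : coupling mu nu pi -> ot_cost mu nu <= pi offdiag.
Proof.
move=> pi_cpl; rewrite -costE; apply: ge_inf; last by exists pi.
by exists 0 => _ [pi' _ <-]; rewrite costE prob_ge0.
Qed.

Lemma ot_cost_ge0 mu nu : 0 <= ot_cost mu nu.
Proof.
apply: lb_le_inf => [|_ [pi _ <-]]; last by rewrite costE prob_ge0.
by exists (cost p (prod_prob mu nu)), (prod_prob mu nu) => //; exact: coupling_prod.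
Qed.

Lemma ot_cost_eq mu nu c :
  (forall pi, coupling mu nu pi -> pi offdiag = c) -> ot_cost mu nu = c.
Proof.
move=> offdiagE; rewrite /ot_cost -[RHS]inf1; congr inf.
apply/seteqP; split=> [_ [pi pi_cpl <-]|_ ->] /=; first by rewrite costE offdiagE.
exists (prod_prob mu nu); first exact: coupling_prod.
by rewrite costE offdiagE //; exact: coupling_prod.
Qed.

Lemma ot_cost_dirac_r m y : ot_cost m (dirac R y) = 1 - m [set y].
Proof.
apply: ot_cost_eq => pi [pi1 pi2].
have full : pi (~` (setT `*` [set y])) = 0 by rewrite probC pi2 dirac_atom eqxx subrr.
rewrite (prob_eq_full (B := ~` [set y] `*` setT) full) ?pi1 ?probC //.
apply/seteqP; split=> -[a b] [ab [_ /= b_y]]; move: ab; rewrite /offdiag /= b_y;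
  by [move/eqP | case=> /eqP].
Qed.

Lemma ot_cost_dirac_l x n : ot_cost (dirac R x) n = 1 - n [set x].
Proof.
apply: ot_cost_eq => pi [pi1 pi2].
have full : pi (~` ([set x] `*` setT)) = 0 by rewrite probC pi1 dirac_atom eqxx subrr.
rewrite (prob_eq_full (B := setT `*` ~` [set x]) full) ?pi2 ?probC //.
apply/seteqP; split=> -[a b] [ab [/= a_x _]]; move: ab; rewrite /offdiag /= a_x;
  by [move/eqP/nesym | case=> _ /nesym/eqP].
Qed.

Lemma ot_cost_le_overlap m n x : ot_cost m n <= 1 - m [set x] * n [set x].
Proof.
apply: (le_trans (ot_cost_le (coupling_prod m n))).
rewrite -prod_probX -probC le_prob // => -[a b] /= ab [/= a_x b_x].
by move: ab; rewrite /offdiag /= a_x b_x eqxx.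
Qed.

End OptimalCost.

Section Isometries.
Variables (R : realType) (X : countType) (p : R).
Hypothesis p_gt0 : 0 < p.
Implicit Types (mu nu m n : prob R X) (f g : prob R X -> prob R X).

Lemma isometry_ot_cost f mu nu : Wp_isometry p f -> ot_cost p (f mu) (f nu) = ot_cost p mu nu.
Proof.
move=> f_iso; have := f_iso mu nu; rewrite !WpE; case: ifP => // _.
have pinv_gt0 : 0 < p^-1 by rewrite invr_gt0.
by apply: (powR_injective pinv_gt0); rewrite nnegrE; exact: ot_cost_ge0.
Qed.

Definition singular mu nu := ot_cost p mu nu = 1.

(* Rigidity is defined through W_p alone, and the rigid measures are exactly
   the Dirac masses. *)
Definition rigid mu := forall mu', (forall nu, singular mu nu -> singular mu' nu) -> mu' = mu.

Lemma rigid_dirac x : rigid (dirac R x).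
Proof.
move=> m sing_m; suff m_x : m [set x] = 1.
  by apply: prob_ext => A; rewrite (prob_atom1E m_x) diracE.
apply: prob_atom1 => y y_x.
have /sing_m : singular (dirac R x) (dirac R y).
  by rewrite /singular ot_cost_dirac_l // dirac_atom eq_sym (negbTE y_x) subr0.
by rewrite /singular ot_cost_dirac_r // => /(congr1 (fun r => 1 - r)); rewrite subKr subrr.
Qed.

Lemma rigid_dirac_eq m : rigid m -> exists x, m = dirac R x.
Proof.
move=> m_rigid; have [x mx_gt0] := exists_atom_gt0 m; exists x.
apply/esym/m_rigid => n m_sing_n.
have nx0 : n [set x] = 0.
  apply/eqP; rewrite eq_le prob_ge0 andbT -(pmulr_rle0 _ mx_gt0).
  by have := ot_cost_le_overlap p_gt0 m n x; rewrite m_sing_n lerBrDr gerDl.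
by rewrite /singular ot_cost_dirac_l // nx0 subr0.
Qed.

Lemma isometry_rigid f g m :
  cancel f g -> cancel g f -> Wp_isometry p f -> rigid m -> rigid (f m).
Proof.
move=> fK gK f_iso m_rigid m' sing_m'; suff <- : g m' = m by rewrite gK.
apply: m_rigid => n m_sing_n.
rewrite /singular -(isometry_ot_cost _ _ f_iso) gK; apply: sing_m'.
by rewrite /singular isometry_ot_cost.
Qed.

Lemma isometry_dirac f g :
  cancel f g -> cancel g f -> Wp_isometry p f -> forall x, exists y, f (dirac R x) = dirac R y.
Proof.
by move=> fK gK f_iso x; apply/rigid_dirac_eq/(isometry_rigid fK gK f_iso)/rigid_dirac.
Qed.

Lemma isometry_atoms f : bijective f -> Wp_isometry p f ->
  exists sigma sigmainv : X -> X,
    [/\ cancel sigma sigmainv, cancel sigmainv sigma &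
        forall mu x, f mu [set x] = mu [set sigmainv x]].
Proof.
case=> g fK gK f_iso.
have g_iso : Wp_isometry p g.
  by move=> mu nu; rewrite -[in RHS](gK mu) -[in RHS](gK nu) f_iso.
have [sigma f_dirac] := choice (isometry_dirac fK gK f_iso).
have [sigmainv g_dirac] := choice (isometry_dirac gK fK g_iso).
exists sigma, sigmainv; split=> [x|y|mu x].
- by apply: (@dirac_inj R); rewrite -g_dirac -f_dirac fK.
- by apply: (@dirac_inj R); rewrite -f_dirac -g_dirac gK.
- have f_dirac_sx : f (dirac R (sigmainv x)) = dirac R x by rewrite -g_dirac gK.
  have := isometry_ot_cost mu (dirac R (sigmainv x)) f_iso.
  by rewrite f_dirac_sx !ot_cost_dirac_r // => /addrI/oppr_inj.
Qed.

End Isometries.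

Section PushforwardIsometry.
Variables (R : realType) (X : countType).
Implicit Types (mu nu : prob R X) (pi : prob R (X * X)) (h : X -> X).

Definition push_coupling h pi : prob R (X * X) := pushforward (fun z => (h z.1, h z.2)) pi.

Lemma cost_push_coupling p h pi : injective h -> cost p (push_coupling h pi) = cost p pi.
Proof.
move=> h_inj; rewrite /cost /=.
have rho_preimage c : (fun z => (h z.1, h z.2)) @^-1` [set z | rho R z.1 z.2 = c] =
                 [set z | rho R z.1 z.2 = c].
  by apply/seteqP; split=> z; rewrite /= /rho (inj_eq h_inj).
by rewrite !rho_preimage.
Qed.

Lemma coupling_push h mu nu pi : coupling mu nu pi ->
  coupling (pushforward h mu) (pushforward h nu) (push_coupling h pi).
Proof. by case=> pi1 pi2; split=> A /=; [exact: pi1 | exact: pi2]. Qed.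

Variables (sigma sigmainv : X -> X).
Hypotheses (sigmaK : cancel sigma sigmainv) (sigmainvK : cancel sigmainv sigma).

Lemma pushforward_atom mu x : pushforward sigma mu [set x] = mu [set sigmainv x].
Proof.
congr (pmeas mu _); apply/seteqP; split=> t /= => [<-|->]; by rewrite ?sigmaK ?sigmainvK.
Qed.

Lemma pushforwardK : cancel (pushforward sigma) (@pushforward R _ _ sigmainv).
Proof.
move=> mu; apply: prob_ext => A /=; congr (pmeas mu _).
by apply/seteqP; split=> t /=; rewrite sigmaK.
Qed.

Lemma pushforward_costs (p : R) mu nu :
  [set cost p pi | pi in [set pi |
    coupling (pushforward sigma mu) (pushforward sigma nu) pi]] =
  [set cost p pi | pi in [set pi | coupling mu nu pi]].
Proof.
apply/seteqP; split=> _ [pi pi_cpl <-].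
- exists (push_coupling sigmainv pi); last exact/cost_push_coupling/(can_inj sigmainvK).
  by rewrite /= -(pushforwardK mu) -(pushforwardK nu); exact: coupling_push.
- exists (push_coupling sigma pi); first exact: coupling_push.
  exact/cost_push_coupling/(can_inj sigmaK).
Qed.

Lemma pushforward_isometry (p : R) : Wp_isometry p (pushforward sigma).
Proof. by move=> mu nu; rewrite /Wp pushforward_costs. Qed.

End PushforwardIsometry.

Theorem corollary2p2 (R : realType) (X : countType) (p : R) :
  (exists x y : X, x != y) -> 0 < p ->
  (forall f : prob R X -> prob R X,
     bijective f -> Wp_isometry p f ->
     exists sigma sigmainv : X -> X,
       [/\ cancel sigma sigmainv, cancel sigmainv sigma &
           forall (mu : prob R X) (x : X), f mu [set x] = mu [set sigmainv x]])
  /\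
  (forall sigma sigmainv : X -> X,
     cancel sigma sigmainv -> cancel sigmainv sigma ->
     (exists g : prob R X -> prob R X,
        forall (mu : prob R X) (x : X), g mu [set x] = mu [set sigmainv x])
     /\
     (forall g : prob R X -> prob R X,
        (forall (mu : prob R X) (x : X), g mu [set x] = mu [set sigmainv x]) ->
        Wp_isometry p g)).
Proof.
move=> _ p_gt0; split=> [f|sigma sigmainv sigmaK sigmainvK]; first exact: isometry_atoms.
have push_atom := pushforward_atom sigmaK sigmainvK.
split=> [|g gE]; first by exists (pushforward sigma).
have -> : g = pushforward sigma.
  by apply/funext => mu; apply: prob_atom_ext => x; rewrite gE push_atom.
exact: pushforward_isometry.
Qed.
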